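(* Let $\mathcal{S}\in\mathscr{W}$ be $C^3$-smooth with an isolated umbilic point at $\theta=0$, and let $\alpha\in\mathbb{R}$. Then (1) if $\mu_0>\alpha+1$, then $\lim_{\theta\to0}\frac{s(\theta)}{\sin^\alpha\theta}=0$; (2) if $\mu_0<\alpha+1$, then $\lim_{\theta\to0}\frac{s(\theta)}{\sin^\alpha\theta}=\pm\infty$. If $\mathcal{S}$ has an isolated umbilic point at $\theta=\pi$, then the value of $\mu_\pi$ dictates the behaviour of $s/\sin^\alpha\theta$ as $\theta\to\pi$ in the same way.
   Context: $\mathscr{W}$ is the set of embedded $C^2$-smooth topological 2-spheres in $\mathbb{R}^3$ that are rotationally symmetric and strictly convex. A surface in $\mathscr{W}$ is parametrised by the inverse Gauss map with $\theta\in[0,\pi]$ the angle between the outward normal and the symmetry axis ($\theta=0,\pi$ are the poles). With support function $r(\theta)=\vec X\cdot\hat n$, the radii of curvature are $r_1=\frac{\cos^2\theta}{\sin\theta}\frac{d}{d\theta}\left(\frac{r}{\cos\theta}\right)$, $r_2=r''+r$, and the astigmatism is $s=r_2-r_1$; umbilic points are where $s=0$. The umbilic slopes are $\mu_0=\lim_{\theta\to0}\frac{r_2(\theta)-r_2(0)}{r_1(\theta)-r_1(0)}$ and $\mu_\pi=\lim_{\theta\to\pi}\frac{r_2(\theta)-r_2(\pi)}{r_1(\theta)-r_1(\pi)}$. *)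

From Stdlib Require Import Reals.
From Coquelicot Require Import Coquelicot.
Open Scope R_scope.

(* A surface S in W is described (via the inverse Gauss map) by its support
   function r(theta), theta = angle between outward normal and the axis.
   We regard r as the restriction of the (rotationally symmetric) support
   function of S on S^2 to a meridian great circle, i.e. as a function on R
   which is even and 2*pi-periodic. *)

Definition C3 (r : R -> R) : Prop :=
  (forall t, ex_derive_n r 1 t) /\
  (forall t, ex_derive_n r 2 t) /\
  (forall t, ex_derive_n r 3 t) /\
  (forall t, continuous (Derive_n r 3) t).

(* radii of curvature:  r1 = cos^2/sin * d/dtheta (r / cos) = r + r' cos / sin,
   r2 = r'' + r;  astigmatism s = r2 - r1 (for 0 < theta < pi) *)
Definition r1 (r : R -> R) (t : R) : R := r t + Derive r t * cos t / sin t.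
Definition r2 (r : R -> R) (t : R) : R := Derive_n r 2 t + r t.
Definition astig (r : R -> R) (t : R) : R := r2 r t - r1 r t.

(* r is the support function of a C^3-smooth surface in W:
   C^3, rotationally symmetric (even, 2pi-periodic along the meridian),
   strictly convex (both radii of curvature positive, at the poles
   r1 = r2 = r'' + r). *)
Definition support_fun_W_C3 (r : R -> R) : Prop :=
  C3 r /\
  (forall t, r (- t) = r t) /\
  (forall t, r (t + 2 * PI) = r t) /\
  (forall t, 0 < t < PI -> 0 < r1 r t) /\
  (forall t, 0 <= t <= PI -> 0 < r2 r t).

(* isolated umbilic at the poles (the poles are always umbilic) *)
Definition isolated_umbilic_0 (r : R -> R) : Prop :=
  exists eps, 0 < eps /\ forall t, 0 < t < eps -> astig r t <> 0.
Definition isolated_umbilic_pi (r : R -> R) : Prop :=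
  exists eps, 0 < eps /\ forall t, PI - eps < t < PI -> astig r t <> 0.

(* mu is the umbilic slope mu_0 (resp. mu_pi); r1(0), r1(pi) are the
   limiting values of r1 at the poles *)
Definition umbilic_slope_0 (r : R -> R) (mu : R) : Prop :=
  exists r10, filterlim (r1 r) (at_right 0) (locally r10) /\
    filterlim (fun t => (r2 r t - r2 r 0) / (r1 r t - r10))
      (at_right 0) (locally mu).
Definition umbilic_slope_pi (r : R -> R) (mu : R) : Prop :=
  exists r1pi, filterlim (r1 r) (at_left PI) (locally r1pi) /\
    filterlim (fun t => (r2 r t - r2 r PI) / (r1 r t - r1pi))
      (at_left PI) (locally mu).

From Stdlib Require Import Reals Lra Lia.
From Coquelicot Require Import Coquelicot.
Open Scope R_scope.

(* Away from the poles r1' = s cot(theta), and the umbilic slope at theta = 0 says that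
   s / (r1 - r1(0)) tends to mu - 1.  So g = r1 - r1(0) has logarithmic derivative close to
   (mu - 1) cot(theta), and comparing with the logarithmic derivative b cot(theta) of
   sin^b(theta) squeezes g between multiples of sin^b for every b on either side of mu - 1.
   Since s is about (mu - 1) g, s / sin^alpha tends to 0 when alpha < mu - 1 and to an
   infinity when alpha > mu - 1; the latter needs mu > 1, which holds because s = O(theta) for
   a C^3 even support function (this forces mu >= 2).  An isolated umbilic gives s a constant
   sign near the pole, and changing (g, s) into (-g, -s) reduces to s > 0.  The pole theta = pi
   is the pole 0 of the reflected support function theta |-> r(pi - theta). *)

Lemma at_right_0_iff (P : R -> Prop) :
  at_right 0 P <-> exists d, 0 < d /\ forall t, 0 < t < d -> P t.
Proof.
split.
- intros [e He]. exists e. split; [apply cond_pos|]. intros t Ht.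
  apply He; [|lra]. change (Rabs (t - 0) < e). rewrite Rminus_0_r, Rabs_pos_eq; lra.
- intros [d [Hd H]]. exists (mkposreal d Hd). intros t Ht Ht0. apply H.
  change (Rabs (t - 0) < d) in Ht. rewrite Rminus_0_r in Ht. apply Rabs_def2 in Ht. lra.
Qed.

Lemma at_right_0_interval d : 0 < d -> at_right 0 (fun t => 0 < t < d).
Proof. intros Hd. apply at_right_0_iff. exists d. auto. Qed.

Lemma MVT_open_interval (f df : R -> R) a b u v :
  (forall x, a < x < b -> is_derive f x (df x)) -> a < u -> u <= v -> v < b ->
  exists c, u <= c <= v /\ f v - f u = df c * (v - u).
Proof.
intros Hf Hu Huv Hv.
destruct (MVT_gen f u v df) as [c [Hc Heq]].
- intros x Hx. rewrite Rmin_left, Rmax_right in Hx by lra. apply Hf. lra.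
- intros x Hx. rewrite Rmin_left, Rmax_right in Hx by lra.
  apply continuity_pt_filterlim, (ex_derive_continuous (K := R_AbsRing) (V := R_NormedModule)).
  exists (df x). apply Hf. lra.
- rewrite Rmin_left, Rmax_right in Hc by lra. now exists c.
Qed.

Lemma filterlim_Rmult_Rbar {T} {F : (T -> Prop) -> Prop} {FF : Filter F}
  (f g : T -> R) (lf lg l : Rbar) :
  is_Rbar_mult lf lg l -> filterlim f F (Rbar_locally lf) ->
  filterlim g F (Rbar_locally lg) -> filterlim (fun x => f x * g x) F (Rbar_locally l).
Proof.
intros Hl Hf Hg. apply (filterlim_comp_2 f g Rmult Hf Hg). now apply filterlim_Rbar_mult.
Qed.

Lemma filterlim_linear_at_right_0 K : filterlim (fun t => K * t) (at_right 0) (locally 0).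
Proof.
apply (filterlim_filter_le_1 _ (filter_le_within (F := locally 0) _)).
rewrite <- (Rmult_0_r K) at 2. apply continuity_pt_filterlim. reg.
Qed.

Lemma filterlim_abs_le_linear_0 (f : R -> R) d K :
  0 < d -> (forall t, 0 < t < d -> Rabs (f t) <= K * t) ->
  filterlim f (at_right 0) (locally 0).
Proof.
intros Hd Hf.
apply (filterlim_le_le (fun t => - K * t) f (fun t => K * t) 0).
- apply (filter_imp (fun t => 0 < t < d)); [|now apply at_right_0_interval].
  intros t Ht. specialize (Hf t Ht). apply Rabs_le_between in Hf. lra.
- apply filterlim_linear_at_right_0.
- apply filterlim_linear_at_right_0.
Qed.

Lemma sin_ge_half t : 0 <= t <= 1 -> t / 2 <= sin t.
Proof.
intros Ht. assert (HPI := PI2_1).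
destruct (sin_bound t 0 ltac:(lra) ltac:(lra)) as [H _].
unfold sin_approx, sin_term in H. simpl in H.
assert (t * (t * (t * 1)) <= t) by nra. lra.
Qed.

Lemma sin_pos_le_1 t : 0 < t <= 1 -> 0 < sin t.
Proof. intros Ht. assert (H := PI2_1). apply sin_gt_0; lra. Qed.

Lemma cot_pos t : 0 < t <= 1 -> 0 < cos t / sin t.
Proof.
intros Ht. assert (H := PI2_1).
apply Rdiv_lt_0_compat; [apply cos_gt_0; lra | now apply sin_pos_le_1].
Qed.

Lemma Rpower_pos x y : 0 < Rpower x y.
Proof. apply exp_pos. Qed.

Lemma filterlim_sin_at_right_0 : filterlim sin (at_right 0) (at_right 0).
Proof.
intros P HP. apply at_right_0_iff in HP as [d [Hd HP]]. apply at_right_0_iff.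
exists (Rmin d 1). split; [apply Rmin_glb_lt; lra |]. intros t Ht.
assert (t <= 1) by (assert (Rmin d 1 <= 1) by apply Rmin_r; lra).
assert (t < d) by (assert (Rmin d 1 <= d) by apply Rmin_l; lra).
assert (sin t < t) by (apply sin_lt_x; lra).
assert (0 < sin t) by (apply sin_pos_le_1; lra).
apply HP. lra.
Qed.

Lemma filterlim_Rpower_0_pos c :
  0 < c -> filterlim (fun x => Rpower x c) (at_right 0) (locally 0).
Proof.
intros Hc. apply (filterlim_comp _ _ _ (fun x => c * ln x) exp _ (Rbar_locally m_infty)).
- apply (filterlim_comp _ _ _ ln (Rmult c) _ (Rbar_locally m_infty) _ is_lim_ln_0).
  intros P [M HM]. exists (M / c). intros x Hx. apply HM.
  apply Rmult_lt_compat_l with (r := c) in Hx; [|lra].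
  now replace (c * (M / c)) with M in Hx by (field; lra).
- exact is_lim_exp_m.
Qed.

Lemma filterlim_Rpower_0_neg c :
  c < 0 -> filterlim (fun x => Rpower x c) (at_right 0) (Rbar_locally p_infty).
Proof.
intros Hc. apply (filterlim_comp _ _ _ (fun x => c * ln x) exp _ (Rbar_locally p_infty)).
- apply (filterlim_comp _ _ _ ln (Rmult c) _ (Rbar_locally m_infty) _ is_lim_ln_0).
  intros P [M HM]. exists (M / c). intros x Hx. apply HM.
  apply Rmult_lt_gt_compat_neg_l with (r := c) in Hx; [|lra].
  now replace (c * (M / c)) with M in Hx by (field; lra).
- exact is_lim_exp_p.
Qed.

Lemma filterlim_Rpower_sin_0_pos c :
  0 < c -> filterlim (fun t => Rpower (sin t) c) (at_right 0) (locally 0).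
Proof.
intros Hc.
exact (filterlim_comp _ _ _ sin _ _ _ _ filterlim_sin_at_right_0 (filterlim_Rpower_0_pos c Hc)).
Qed.

Lemma filterlim_Rpower_sin_0_neg c :
  c < 0 -> filterlim (fun t => Rpower (sin t) c) (at_right 0) (Rbar_locally p_infty).
Proof.
intros Hc.
exact (filterlim_comp _ _ _ sin _ _ _ _ filterlim_sin_at_right_0 (filterlim_Rpower_0_neg c Hc)).
Qed.

Section SinPowerComparison.

Variables (G dG : R -> R) (b d : R).
Hypothesis d_le_PI : d <= PI.
Hypothesis G_derive : forall t, 0 < t < d -> is_derive G t (dG t).

Lemma is_derive_div_Rpower_sin t : 0 < t < d ->
  is_derive (fun x => G x / Rpower (sin x) b) t
    ((dG t - b * (cos t / sin t) * G t) / Rpower (sin t) b).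
Proof.
intros Ht. assert (Hs : 0 < sin t) by (apply sin_gt_0; lra).
assert (Hp : 0 < Rpower (sin t) b) by apply Rpower_pos.
unfold Rpower in *. auto_derive.
- repeat split; [now exists (dG t); apply G_derive | lra | apply Rgt_not_eq; lra].
- change (Derive (fun x => G x) t) with (Derive G t).
  rewrite (is_derive_unique G t (dG t) (G_derive t Ht)). field. split; lra.
Qed.

Lemma div_Rpower_sin_le :
  (forall t, 0 < t < d -> b * (cos t / sin t) * G t <= dG t) ->
  forall u v, 0 < u -> u <= v -> v < d ->
  G u / Rpower (sin u) b <= G v / Rpower (sin v) b.
Proof.
intros Hcmp u v Hu Huv Hv.
destruct (MVT_open_interval _ _ 0 d u v is_derive_div_Rpower_sin Hu Huv Hv) as [c [Hc Heq]].
assert (0 <= (dG c - b * (cos c / sin c) * G c) / Rpower (sin c) b).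
{ apply Rdiv_le_0_compat; [specialize (Hcmp c ltac:(lra)); lra | apply Rpower_pos]. }
assert (0 <= (dG c - b * (cos c / sin c) * G c) / Rpower (sin c) b * (v - u))
  by (apply Rmult_le_pos; lra).
lra.
Qed.

End SinPowerComparison.

Lemma filterlim_sub_const {T} {F : (T -> Prop) -> Prop} {FF : Filter F}
  (f : T -> R) l c :
  filterlim f F (locally l) -> filterlim (fun x => f x - c) F (locally (l - c)).
Proof.
intros Hf. apply (filterlim_comp _ _ _ f (fun y => y - c) _ _ _ Hf).
apply (continuity_pt_filterlim (fun y => y - c)). reg.
Qed.

Lemma filterlim_locally_between {T} {F : (T -> Prop) -> Prop} {FF : Filter F}
  (f : T -> R) l a c :
  filterlim f F (locally l) -> a < l < c -> F (fun x => a < f x < c).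
Proof.
intros Hf Hl. assert (He : 0 < Rmin (l - a) (c - l)) by (apply Rmin_glb_lt; lra).
apply (Hf (fun y => a < y < c)). exists (mkposreal _ He).
intros y Hy. change (Rabs (y - l) < Rmin (l - a) (c - l)) in Hy.
assert (Rmin (l - a) (c - l) <= l - a) by apply Rmin_l.
assert (Rmin (l - a) (c - l) <= c - l) by apply Rmin_r.
apply Rabs_def2 in Hy. lra.
Qed.

Section SlopeAsymptotics.

(* [g] stands for [r1 - r1(0)] and [s] for the astigmatism, so that [g' = s cot] and the
   umbilic slope is the limit of [(s + g) / g = (r2 - r2(0)) / (r1 - r1(0))]. *)
Variables (g s : R -> R) (d K : R).
Hypothesis d_pos : 0 < d.
Hypothesis d_le_1 : d <= 1.
Hypothesis g_derive : forall t, 0 < t < d -> is_derive g t (s t * (cos t / sin t)).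
Hypothesis g_O : forall t, 0 < t < d -> Rabs (g t) <= K * t.
Hypothesis s_pos : forall t, 0 < t < d -> 0 < s t.

Lemma g_increasing u v : 0 < u -> u < v -> v < d -> g u < g v.
Proof.
intros Hu Huv Hv.
destruct (MVT_open_interval g _ 0 d u v g_derive Hu ltac:(lra) Hv) as [c [Hc Heq]].
assert (0 < s c * (cos c / sin c) * (v - u)).
{ apply Rmult_lt_0_compat; [apply Rmult_lt_0_compat; [apply s_pos | apply cot_pos] |]; lra. }
lra.
Qed.

Lemma g_pos t : 0 < t < d -> 0 < g t.
Proof.
intros Ht.
assert (Hle : 0 <= g (t / 2)).
{ apply (filterlim_le (F := at_right 0) g (fun _ => g (t / 2)) 0 (g (t / 2))).
  - apply (filter_imp (fun u => 0 < u < t / 2)); [|apply at_right_0_interval; lra].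
    intros u Hu. left. apply g_increasing; lra.
  - exact (filterlim_abs_le_linear_0 g d K d_pos g_O).
  - apply filterlim_const. }
assert (g (t / 2) < g t) by (apply g_increasing; lra).
lra.
Qed.

Variable mu : R.
Hypothesis slope : filterlim (fun t => (s t + g t) / g t) (at_right 0) (locally mu).

Lemma slope_ratio_limit : filterlim (fun t => s t / g t) (at_right 0) (locally (mu - 1)).
Proof.
apply (filterlim_ext_loc (fun t => (s t + g t) / g t - 1)).
- apply (filter_imp (fun t => 0 < t < d)); [|now apply at_right_0_interval].
  intros t Ht. assert (Hg := g_pos t Ht). field. lra.
- now apply filterlim_sub_const.
Qed.

Lemma derivative_g_between a c : a < mu - 1 < c ->
  exists e, 0 < e <= d /\ forall t, 0 < t < e ->
    a * (cos t / sin t) * g t <= s t * (cos t / sin t) <= c * (cos t / sin t) * g t.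
Proof.
intros Hm.
destruct (proj1 (at_right_0_iff _) (filterlim_locally_between _ _ a c slope_ratio_limit Hm))
  as [e [He Hh]].
exists (Rmin e d). split; [split; [apply Rmin_glb_lt; lra | apply Rmin_r] |].
intros t Ht.
assert (t < e) by (assert (Rmin e d <= e) by apply Rmin_l; lra).
assert (t < d) by (assert (Rmin e d <= d) by apply Rmin_r; lra).
assert (Hg := g_pos t ltac:(lra)). assert (Hcot := cot_pos t ltac:(lra)).
specialize (Hh t ltac:(lra)).
assert (Hk : 0 < cos t / sin t * g t) by (apply Rmult_lt_0_compat; lra).
replace (s t) with (s t / g t * g t) by (field; lra).
split; nra.
Qed.

Lemma g_le_Rpower_sin b : b < mu - 1 ->
  exists C, at_right 0 (fun t => g t <= C * Rpower (sin t) b).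
Proof.
intros Hb. destruct (derivative_g_between b mu ltac:(lra)) as [e [He Hcmp]].
assert (HeP : e <= PI) by (assert (H := PI2_1); lra).
exists (g (e / 2) / Rpower (sin (e / 2)) b).
apply (filter_imp (fun t => 0 < t < e / 2)); [|apply at_right_0_interval; lra].
intros t Ht.
assert (Hle : g t / Rpower (sin t) b <= g (e / 2) / Rpower (sin (e / 2)) b).
{ apply (div_Rpower_sin_le g (fun t => s t * (cos t / sin t)) b e HeP); try lra.
  - intros x Hx. apply g_derive. lra.
  - intros x Hx. apply Hcmp, Hx. }
assert (HP : 0 < Rpower (sin t) b) by apply Rpower_pos.
apply Rmult_le_compat_r with (r := Rpower (sin t) b) in Hle; [|lra].
now replace (g t / Rpower (sin t) b * Rpower (sin t) b) with (g t) in Hle by (field; lra).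
Qed.

Lemma Rpower_sin_le_g b : mu - 1 < b ->
  exists C, 0 < C /\ at_right 0 (fun t => C * Rpower (sin t) b <= g t).
Proof.
intros Hb. destruct (derivative_g_between (mu - 2) b ltac:(lra)) as [e [He Hcmp]].
assert (HeP : e <= PI) by (assert (H := PI2_1); lra).
exists (g (e / 2) / Rpower (sin (e / 2)) b). split.
{ apply Rdiv_lt_0_compat; [apply g_pos; lra | apply Rpower_pos]. }
apply (filter_imp (fun t => 0 < t < e / 2)); [|apply at_right_0_interval; lra].
intros t Ht.
assert (Hle : - g t / Rpower (sin t) b <= - g (e / 2) / Rpower (sin (e / 2)) b).
{ apply (div_Rpower_sin_le (fun t => - g t) (fun t => - (s t * (cos t / sin t))) b e HeP); try lra.
  - intros x Hx. apply (is_derive_opp g). apply g_derive. lra.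
  - intros x Hx. specialize (Hcmp x Hx). lra. }
assert (HP : 0 < Rpower (sin t) b) by apply Rpower_pos.
apply Rmult_le_compat_r with (r := Rpower (sin t) b) in Hle; [|lra].
replace (- g t / Rpower (sin t) b * Rpower (sin t) b) with (- g t) in Hle by (field; lra).
unfold Rdiv in *. lra.
Qed.

Lemma Rpower_sin_split t b alpha :
  Rpower (sin t) b / Rpower (sin t) alpha = Rpower (sin t) (b - alpha).
Proof.
replace b with ((b - alpha) + alpha) at 1 by ring. rewrite Rpower_plus.
assert (0 < Rpower (sin t) alpha) by apply Rpower_pos. field. lra.
Qed.

Lemma g_div_Rpower_sin_0 alpha : alpha + 1 < mu ->
  filterlim (fun t => g t / Rpower (sin t) alpha) (at_right 0) (locally 0).
Proof.
intros Halpha. set (b := (alpha + mu - 1) / 2).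
destruct (g_le_Rpower_sin b ltac:(unfold b; lra)) as [C HC].
apply (filterlim_le_le (fun _ => 0) _ (fun t => C * Rpower (sin t) (b - alpha)) 0).
- apply (filter_imp (fun t => (0 < t < d) /\ g t <= C * Rpower (sin t) b));
    [|apply filter_and; [apply at_right_0_interval |]; assumption].
  intros t [Ht Hle]. assert (HP : 0 < Rpower (sin t) alpha) by apply Rpower_pos.
  rewrite <- Rpower_sin_split. split.
  + apply Rdiv_le_0_compat; [left; apply g_pos|]; lra.
  + unfold Rdiv. rewrite <- Rmult_assoc.
    apply Rmult_le_compat_r; [left; apply Rinv_0_lt_compat|]; lra.
- apply filterlim_const.
- apply (filterlim_Rmult_Rbar _ _ C 0); [| apply filterlim_const |].
  { unfold is_Rbar_mult. simpl. now rewrite Rmult_0_r. }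
  apply filterlim_Rpower_sin_0_pos. unfold b. lra.
Qed.

Lemma g_div_Rpower_sin_pinfty alpha : mu < alpha + 1 ->
  filterlim (fun t => g t / Rpower (sin t) alpha) (at_right 0) (Rbar_locally p_infty).
Proof.
intros Halpha. set (b := (alpha + mu - 1) / 2).
destruct (Rpower_sin_le_g b ltac:(unfold b; lra)) as [C [HC0 HC]].
apply (filterlim_ge_p_infty (fun t => C * Rpower (sin t) (b - alpha))).
- apply (filter_imp (fun t => C * Rpower (sin t) b <= g t)); [|exact HC].
  intros t Hle. assert (HP : 0 < Rpower (sin t) alpha) by apply Rpower_pos.
  rewrite <- Rpower_sin_split. unfold Rdiv. rewrite <- Rmult_assoc.
  apply Rmult_le_compat_r; [left; apply Rinv_0_lt_compat|]; lra.
- apply (filterlim_Rmult_Rbar _ _ C p_infty); [| apply filterlim_const |].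
  + apply is_Rbar_mult_sym, is_Rbar_mult_p_infty_pos. exact HC0.
  + apply filterlim_Rpower_sin_0_neg. unfold b. lra.
Qed.

(* For [mu < 2], [g / sin] would tend to infinity although [g = O(t)]. *)
Lemma slope_ge_2 : 2 <= mu.
Proof.
destruct (Rle_or_lt 2 mu) as [|Hmu]; [assumption | exfalso].
assert (Hle : Rbar_le p_infty (2 * K)).
{ apply (filterlim_le (F := at_right 0) (fun t => g t / Rpower (sin t) 1) (fun _ => 2 * K)).
  - apply (filter_imp (fun t => 0 < t < d)); [|now apply at_right_0_interval].
    intros t Ht. assert (Hs := sin_ge_half t ltac:(lra)).
    rewrite Rpower_1 by lra. apply Rmult_le_reg_r with (sin t); [lra|].
    replace (g t / sin t * sin t) with (g t) by (field; lra).
    assert (Hg := g_O t Ht). apply Rabs_le_between in Hg. nra.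
  - apply g_div_Rpower_sin_pinfty. lra.
  - apply filterlim_const. }
exact Hle.
Qed.

Lemma s_div_Rpower_sin_factor alpha :
  at_right 0 (fun t => s t / g t * (g t / Rpower (sin t) alpha) = s t / Rpower (sin t) alpha).
Proof.
apply (filter_imp (fun t => 0 < t < d)); [|now apply at_right_0_interval].
intros t Ht. assert (Hg := g_pos t Ht). assert (0 < Rpower (sin t) alpha) by apply Rpower_pos.
field. lra.
Qed.

Lemma s_div_Rpower_sin_0 alpha : alpha + 1 < mu ->
  filterlim (fun t => s t / Rpower (sin t) alpha) (at_right 0) (locally 0).
Proof.
intros Halpha. apply (filterlim_ext_loc _ _ (s_div_Rpower_sin_factor alpha)).
change (locally 0) with (Rbar_locally (Finite 0)).
apply (filterlim_Rmult_Rbar _ _ (mu - 1) 0);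
  [| exact slope_ratio_limit | now apply g_div_Rpower_sin_0].
unfold is_Rbar_mult. simpl. now rewrite Rmult_0_r.
Qed.

Lemma s_div_Rpower_sin_pinfty alpha : mu < alpha + 1 ->
  filterlim (fun t => s t / Rpower (sin t) alpha) (at_right 0) (Rbar_locally p_infty).
Proof.
intros Halpha. apply (filterlim_ext_loc _ _ (s_div_Rpower_sin_factor alpha)).
apply (filterlim_Rmult_Rbar _ _ (mu - 1) p_infty);
  [| exact slope_ratio_limit | now apply g_div_Rpower_sin_pinfty].
apply is_Rbar_mult_sym, is_Rbar_mult_p_infty_pos.
assert (Hmu := slope_ge_2). simpl. lra.
Qed.

End SlopeAsymptotics.

Lemma filterlim_Ropp_Rbar {T} {F : (T -> Prop) -> Prop} {FF : Filter F} (f : T -> R) l :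
  filterlim f F (Rbar_locally l) -> filterlim (fun x => - f x) F (Rbar_locally (Rbar_opp l)).
Proof. intros Hf. exact (filterlim_comp _ _ _ f Ropp _ _ _ Hf (filterlim_Rbar_opp l)). Qed.

Lemma slope_asymptotics (g s : R -> R) d K mu alpha :
  0 < d <= 1 ->
  (forall t, 0 < t < d -> is_derive g t (s t * (cos t / sin t))) ->
  (forall t, 0 < t < d -> Rabs (g t) <= K * t) ->
  (forall t, 0 < t < d -> 0 < s t) \/ (forall t, 0 < t < d -> s t < 0) ->
  filterlim (fun t => (s t + g t) / g t) (at_right 0) (locally mu) ->
  (alpha + 1 < mu ->
     filterlim (fun t => s t / Rpower (sin t) alpha) (at_right 0) (locally 0)) /\
  (mu < alpha + 1 ->
     filterlim (fun t => s t / Rpower (sin t) alpha) (at_right 0) (Rbar_locally p_infty) \/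
     filterlim (fun t => s t / Rpower (sin t) alpha) (at_right 0) (Rbar_locally m_infty)).
Proof.
intros Hd Hder HO [Hpos | Hneg] Hmu.
- split; intros Halpha.
  + now apply (s_div_Rpower_sin_0 g s d K) with mu.
  + left. now apply (s_div_Rpower_sin_pinfty g s d K) with mu.
- assert (Hder' : forall t, 0 < t < d ->
    is_derive (fun t => - g t) t (- s t * (cos t / sin t))).
  { intros t Ht. rewrite Ropp_mult_distr_l_reverse.
    apply (is_derive_opp (K := R_AbsRing) (V := R_NormedModule) g). now apply Hder. }
  assert (HO' : forall t, 0 < t < d -> Rabs (- g t) <= K * t).
  { intros t Ht. rewrite Rabs_Ropp. now apply HO. }
  assert (Hpos : forall t, 0 < t < d -> 0 < - s t) by (intros t Ht; specialize (Hneg t Ht); lra).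
  assert (Hmu' : filterlim (fun t => (- s t + - g t) / - g t) (at_right 0) (locally mu)).
  { apply (filterlim_ext (fun t => (s t + g t) / g t)); [|exact Hmu].
    intros t. unfold Rdiv. rewrite Rinv_opp. ring. }
  assert (Hflip : forall t, - (- s t / Rpower (sin t) alpha) = s t / Rpower (sin t) alpha)
    by (intros t; unfold Rdiv; ring).
  split; intros Halpha.
  + apply (filterlim_ext _ _ Hflip).
    replace (locally 0) with (Rbar_locally (Rbar_opp 0)) by (simpl; now rewrite Ropp_0).
    apply filterlim_Ropp_Rbar.
    now apply (s_div_Rpower_sin_0 (fun t => - g t) (fun t => - s t) d K) with mu.
  + right. apply (filterlim_ext _ _ Hflip).
    apply (filterlim_Ropp_Rbar _ p_infty).
    now apply (s_div_Rpower_sin_pinfty (fun t => - g t) (fun t => - s t) d K) with mu.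
Qed.

Lemma nonvanishing_same_sign (f : R -> R) x y :
  x < y -> (forall z, x <= z <= y -> continuity_pt f z) ->
  (forall z, x <= z <= y -> f z <> 0) -> 0 < f x * f y.
Proof.
intros Hxy Hc Hn.
assert (Hx : f x <> 0) by (apply Hn; lra). assert (Hy : f y <> 0) by (apply Hn; lra).
destruct (Rlt_or_le 0 (f x * f y)) as [|Hle]; [assumption | exfalso].
destruct (Rlt_or_le (f x) 0) as [Hfx | Hfx].
- destruct (Ranalysis5.IVT_interv f x y Hc Hxy Hfx) as [z [Hz Hz0]].
  + destruct (Rlt_or_le 0 (f y)); [assumption | nra].
  + exact (Hn z Hz Hz0).
- destruct (Ranalysis5.IVT_interv (fun z => - f z) x y) as [z [Hz Hz0]].
  + intros z Hz. apply continuity_pt_opp, Hc, Hz.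
  + exact Hxy.
  + lra.
  + destruct (Rlt_or_le (f y) 0); [lra | nra].
  + apply (Hn z Hz). lra.
Qed.

Lemma continuous_nonvanishing_sign (f : R -> R) a b :
  a < b -> (forall x, a < x < b -> continuity_pt f x) -> (forall x, a < x < b -> f x <> 0) ->
  (forall x, a < x < b -> 0 < f x) \/ (forall x, a < x < b -> f x < 0).
Proof.
intros Hab Hc Hn. set (c := (a + b) / 2).
assert (Hsame : forall x, a < x < b -> 0 < f x * f c).
{ intros x Hx. destruct (Rtotal_order x c) as [Hxc | [-> | Hxc]].
  - apply nonvanishing_same_sign; [lra | |];
      intros z Hz; [apply Hc | apply Hn]; unfold c in *; lra.
  - assert (f c <> 0) by (apply Hn; lra). nra.
  - rewrite Rmult_comm.
    apply nonvanishing_same_sign; [lra | |];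
      intros z Hz; [apply Hc | apply Hn]; unfold c in *; lra. }
assert (f c <> 0) by (apply Hn; unfold c; lra).
destruct (Rlt_or_le 0 (f c)); [left | right]; intros x Hx; specialize (Hsame x Hx); nra.
Qed.

Section SupportFunction.

Variable r : R -> R.
Hypothesis r_C3 : C3 r.

Lemma is_derive_r t : is_derive r t (Derive r t).
Proof. apply Derive_correct. exact (proj1 r_C3 t). Qed.

Lemma is_derive_Derive_r t : is_derive (Derive r) t (Derive_n r 2 t).
Proof. apply Derive_correct. exact (proj1 (proj2 r_C3) t). Qed.

Lemma is_derive_Derive_2_r t : is_derive (Derive_n r 2) t (Derive_n r 3 t).
Proof. apply Derive_correct. exact (proj1 (proj2 (proj2 r_C3)) t). Qed.

Lemma is_derive_r1_sub t c :
  sin t <> 0 -> is_derive (fun x => r1 r x - c) t (astig r t * (cos t / sin t)).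
Proof.
intros Hs. unfold r1. auto_derive.
- repeat split; auto; eexists; [apply is_derive_r | apply is_derive_Derive_r].
- change (Derive (fun x => r x) t) with (Derive r t).
  change (Derive (fun x => Derive r x) t) with (Derive_n r 2 t).
  unfold astig, r2, r1. field. exact Hs.
Qed.

Lemma is_derive_r2 t : is_derive (r2 r) t (Derive_n r 3 t + Derive r t).
Proof.
apply (is_derive_plus (Derive_n r 2) r); [apply is_derive_Derive_2_r | apply is_derive_r].
Qed.

Lemma is_derive_astig_mul_sin t :
  is_derive (fun x => Derive_n r 2 x * sin x - Derive r x * cos x) t
    ((Derive_n r 3 t + Derive r t) * sin t).
Proof.
generalize (is_derive_Derive_2_r t) (is_derive_Derive_r t).
generalize (Derive_n r 3 t) (Derive_n r 2) (Derive r). intros d3 u v Hu Hv.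
auto_derive; [repeat split; eexists; eassumption |].
change (Derive (fun x : R => u x) t) with (Derive u t).
change (Derive (fun x : R => v x) t) with (Derive v t).
rewrite (is_derive_unique u t d3 Hu), (is_derive_unique v t (u t) Hv). ring.
Qed.

Lemma continuity_pt_astig t : sin t <> 0 -> continuity_pt (astig r) t.
Proof.
intros Hs.
apply continuity_pt_filterlim, (ex_derive_continuous (K := R_AbsRing) (V := R_NormedModule)).
unfold astig, r2, r1. auto_derive. repeat split; auto; eexists;
  [apply is_derive_Derive_2_r | apply is_derive_r | apply is_derive_r | apply is_derive_Derive_r].
Qed.

Lemma r2_derivative_bounded :
  exists M, forall t, 0 <= t <= 1 -> Rabs (Derive_n r 3 t + Derive r t) <= M.
Proof.
destruct (continuity_ab_maj (fun t => Rabs (Derive_n r 3 t + Derive r t)) 0 1) as [x [Hx _]].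
- lra.
- intros c _. apply continuity_pt_comp with (f2 := Rabs); [| apply Rcontinuity_abs].
  apply continuity_pt_plus.
  + apply continuity_pt_filterlim. exact (proj2 (proj2 (proj2 r_C3)) c).
  + apply continuity_pt_filterlim, (ex_derive_continuous (K := R_AbsRing) (V := R_NormedModule)).
    eexists. apply is_derive_Derive_r.
- now exists (Rabs (Derive_n r 3 x + Derive r x)).
Qed.

Hypothesis r_even : forall t, r (- t) = r t.

Lemma Derive_r_0 : Derive r 0 = 0.
Proof.
assert (H : is_derive (fun x => r (- x)) 0 (- Derive r 0)).
{ auto_derive; [eexists; apply is_derive_r |].
  rewrite Ropp_0. change (Derive (fun x => r x) 0) with (Derive r 0). ring. }
apply (is_derive_ext _ r) in H; [|intros; apply r_even].
apply is_derive_unique in H. lra.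
Qed.

Section DerivativeBound.

Variable M : R.
Hypothesis r2_derivative_le : forall t, 0 <= t <= 1 -> Rabs (Derive_n r 3 t + Derive r t) <= M.

Lemma r2_sub_r2_0_le t : 0 < t <= 1 -> Rabs (r2 r t - r2 r 0) <= M * t.
Proof.
intros Ht.
destruct (MVT_open_interval (r2 r) _ (-1) 2 0 t (fun x _ => is_derive_r2 x))
  as [c [Hc ->]]; try lra.
rewrite Rminus_0_r, Rabs_mult, (Rabs_pos_eq t) by lra.
apply Rmult_le_compat_r; [lra | apply r2_derivative_le; lra].
Qed.

(* [s sin = r'' sin - r' cos] vanishes at 0 because [r'(0) = 0], and its derivative
   [(r''' + r') sin] is [O(t)]. *)
Lemma astig_le t : 0 < t <= 1 -> Rabs (astig r t) <= 2 * M * t.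
Proof.
intros Ht. assert (HPI := PI2_1).
destruct (MVT_open_interval _ _ (-1) 2 0 t (fun x _ => is_derive_astig_mul_sin x))
  as [c [Hc Heq]]; try lra.
rewrite sin_0, cos_0, Derive_r_0 in Heq.
assert (Hs : t / 2 <= sin t) by (apply sin_ge_half; lra).
assert (Hsc : 0 <= sin c <= t).
{ split; [apply sin_ge_0; lra |].
  destruct (Req_dec c 0) as [-> | Hc0]; [rewrite sin_0; lra |].
  left. apply Rlt_le_trans with c; [apply sin_lt_x |]; lra. }
assert (Hphi : Rabs (astig r t * sin t) <= M * t * t).
{ replace (astig r t * sin t) with ((Derive_n r 3 c + Derive r c) * sin c * (t - 0))
    by (rewrite <- Heq; unfold astig, r2, r1; field; lra).
  rewrite !Rabs_mult, Rminus_0_r, (Rabs_pos_eq (sin c)), (Rabs_pos_eq t) by lra.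
  assert (Hb := r2_derivative_le c ltac:(lra)).
  assert (Ha := Rabs_pos (Derive_n r 3 c + Derive r c)).
  apply Rmult_le_compat_r; [lra|]. apply Rmult_le_compat; lra. }
rewrite Rabs_mult, (Rabs_pos_eq (sin t)) in Hphi by lra.
assert (Ha := Rabs_pos (astig r t)). nra.
Qed.

End DerivativeBound.

Lemma r1_sub_r2_0_O : exists K, forall t, 0 < t <= 1 -> Rabs (r1 r t - r2 r 0) <= K * t.
Proof.
destruct r2_derivative_bounded as [M HM]. exists (3 * M). intros t Ht.
replace (r1 r t - r2 r 0) with ((r2 r t - r2 r 0) - astig r t) by (unfold astig; ring).
assert (H1 := r2_sub_r2_0_le M HM t Ht). assert (H2 := astig_le M HM t Ht).
assert (H3 := Rabs_triang (r2 r t - r2 r 0) (- astig r t)). rewrite Rabs_Ropp in H3.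
unfold Rminus at 1. lra.
Qed.

Lemma astig_sign_0 : isolated_umbilic_0 r ->
  exists e, 0 < e <= 1 /\
    ((forall t, 0 < t < e -> 0 < astig r t) \/ (forall t, 0 < t < e -> astig r t < 0)).
Proof.
intros [e0 [He0 Hiso]]. exists (Rmin e0 1).
assert (He : 0 < Rmin e0 1 <= 1) by (split; [apply Rmin_glb_lt | apply Rmin_r]; lra).
assert (He0' : Rmin e0 1 <= e0) by apply Rmin_l.
split; [exact He |]. apply continuous_nonvanishing_sign; [lra | |].
- intros t Ht. apply continuity_pt_astig.
  assert (0 < sin t) by (apply sin_pos_le_1; lra). lra.
- intros t Ht. apply Hiso. lra.
Qed.

Lemma umbilic_slope_0_ratio mu : umbilic_slope_0 r mu ->
  filterlim (fun t => (astig r t + (r1 r t - r2 r 0)) / (r1 r t - r2 r 0))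
    (at_right 0) (locally mu).
Proof.
intros [r10 [Hr1 Hmu]].
assert (Hr10 : r10 - r2 r 0 = 0).
{ destruct r1_sub_r2_0_O as [K HK].
  apply (filterlim_locally_unique (F := at_right 0) (fun t => r1 r t - r2 r 0)).
  - now apply filterlim_sub_const.
  - apply (filterlim_abs_le_linear_0 _ 1 K); [lra |]. intros t Ht. apply HK. lra. }
refine (filterlim_ext _ _ _ Hmu). intros t. unfold astig. f_equal; lra.
Qed.

Lemma astig_asymptotics_0 alpha : isolated_umbilic_0 r -> forall mu, umbilic_slope_0 r mu ->
  (alpha + 1 < mu ->
     filterlim (fun t => astig r t / Rpower (sin t) alpha) (at_right 0) (locally 0)) /\
  (mu < alpha + 1 ->
     filterlim (fun t => astig r t / Rpower (sin t) alpha) (at_right 0) (Rbar_locally p_infty) \/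
     filterlim (fun t => astig r t / Rpower (sin t) alpha) (at_right 0) (Rbar_locally m_infty)).
Proof.
intros Hiso mu Hmu.
destruct r1_sub_r2_0_O as [K HK]. destruct (astig_sign_0 Hiso) as [e [He Hsign]].
apply (slope_asymptotics (fun t => r1 r t - r2 r 0) (astig r) e K mu alpha He).
- intros t Ht. apply is_derive_r1_sub.
  assert (0 < sin t) by (apply sin_pos_le_1; lra). lra.
- intros t Ht. apply HK. lra.
- exact Hsign.
- now apply umbilic_slope_0_ratio.
Qed.

End SupportFunction.

Lemma filterlim_PI_sub_at_right : filterlim (fun t => PI - t) (at_right 0) (at_left PI).
Proof.
intros P [e He]. exists e. intros t Ht Ht0. apply He; [|lra].
change (Rabs (PI - t - PI) < e). change (Rabs (t - 0) < e) in Ht.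
now replace (PI - t - PI) with (- (t - 0)) by ring; rewrite Rabs_Ropp.
Qed.

Lemma filterlim_PI_sub_at_left : filterlim (fun t => PI - t) (at_left PI) (at_right 0).
Proof.
intros P [e He]. exists e. intros t Ht Ht0. apply He; [|lra].
change (Rabs (PI - t - 0) < e). change (Rabs (t - PI) < e) in Ht.
now replace (PI - t - 0) with (- (t - PI)) by ring; rewrite Rabs_Ropp.
Qed.

(* Written [- t + PI] rather than [PI - t] so that [Derive_n_comp_opp] and
   [Derive_n_comp_trans] apply as they stand. *)
Definition reflect (r : R -> R) (t : R) : R := r (- t + PI).

Section Reflection.

Variable r : R -> R.
Hypothesis r_C3 : C3 r.

Lemma C3_ex_derive_n y k : (k <= 3)%nat -> ex_derive_n r k y.
Proof.
destruct r_C3 as [H1 [H2 [H3 _]]]. intros Hk.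
destruct k as [|[|[|[|k]]]]; [exact I | apply H1 | apply H2 | apply H3 | lia].
Qed.

Lemma Derive_n_reflect n x :
  (n <= 3)%nat -> Derive_n (reflect r) n x = (-1) ^ n * Derive_n r n (- x + PI).
Proof.
intros Hn. unfold reflect.
rewrite (Derive_n_comp_opp (fun y => r (y + PI)) n x), Derive_n_comp_trans; [reflexivity |].
apply filter_forall. intros y k Hk. apply ex_derive_n_comp_trans, C3_ex_derive_n. lia.
Qed.

Lemma C3_reflect : C3 (reflect r).
Proof.
assert (Hex : forall n x, (n <= 3)%nat -> ex_derive_n (reflect r) n x).
{ intros n x Hn. apply (ex_derive_n_comp_opp (fun y => r (y + PI))).
  apply filter_forall. intros y k Hk. apply ex_derive_n_comp_trans, C3_ex_derive_n. lia. }
split; [|split; [|split]]; intros t; try (apply Hex; lia).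
apply (continuous_ext (fun y => - Derive_n r 3 (- y + PI))).
{ intros y. rewrite Derive_n_reflect by lia. simpl. ring. }
apply continuity_pt_filterlim.
apply (continuity_pt_comp (fun y => - y + PI) (fun z => - Derive_n r 3 z)); [reg |].
apply continuity_pt_opp, continuity_pt_filterlim. exact (proj2 (proj2 (proj2 r_C3)) _).
Qed.

Lemma r1_reflect t : r1 (reflect r) t = r1 r (PI - t).
Proof.
unfold r1. change (Derive (reflect r) t) with (Derive_n (reflect r) 1 t).
rewrite Derive_n_reflect, Rtrigo_facts.cos_pi_minus, sin_PI_x by lia. unfold reflect.
replace (- t + PI) with (PI - t) by ring.
change (Derive_n r 1 (PI - t)) with (Derive r (PI - t)). unfold Rdiv. ring.
Qed.

Lemma r2_reflect t : r2 (reflect r) t = r2 r (PI - t).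
Proof.
unfold r2. rewrite Derive_n_reflect by lia. unfold reflect.
replace (- t + PI) with (PI - t) by ring. ring.
Qed.

Lemma astig_reflect t : astig (reflect r) t = astig r (PI - t).
Proof. unfold astig. now rewrite r1_reflect, r2_reflect. Qed.

Lemma reflect_even : (forall t, r (- t) = r t) -> (forall t, r (t + 2 * PI) = r t) ->
  forall t, reflect r (- t) = reflect r t.
Proof.
intros Hev Hper t. unfold reflect.
replace (- - t + PI) with ((t - PI) + 2 * PI) by ring. rewrite Hper, <- Hev. f_equal. ring.
Qed.

Lemma isolated_umbilic_reflect : isolated_umbilic_pi r -> isolated_umbilic_0 (reflect r).
Proof.
intros [e [He Hiso]]. exists e. split; [exact He |].
intros t Ht. rewrite astig_reflect. apply Hiso. lra.
Qed.

Lemma umbilic_slope_reflect mu : umbilic_slope_pi r mu -> umbilic_slope_0 (reflect r) mu.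
Proof.
intros [r1pi [Hr1 Hmu]]. exists r1pi. split.
- apply (filterlim_ext (fun t => r1 r (PI - t))); [intros t; now rewrite r1_reflect |].
  exact (filterlim_comp _ _ _ _ _ _ _ _ filterlim_PI_sub_at_right Hr1).
- apply (filterlim_ext (fun t => (r2 r (PI - t) - r2 r PI) / (r1 r (PI - t) - r1pi))).
  { intros t. now rewrite r1_reflect, !r2_reflect, Rminus_0_r. }
  exact (filterlim_comp _ _ _ _ (fun u => (r2 r u - r2 r PI) / (r1 r u - r1pi)) _ _ _
    filterlim_PI_sub_at_right Hmu).
Qed.

Lemma astig_div_Rpower_sin_reflect alpha (G : (R -> Prop) -> Prop) :
  filterlim (fun t => astig (reflect r) t / Rpower (sin t) alpha) (at_right 0) G ->
  filterlim (fun t => astig r t / Rpower (sin t) alpha) (at_left PI) G.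
Proof.
intros H.
apply (filterlim_ext (fun t => astig (reflect r) (PI - t) / Rpower (sin (PI - t)) alpha)).
{ intros t. rewrite astig_reflect, sin_PI_x. f_equal. f_equal. ring. }
exact (filterlim_comp _ _ _ _ (fun u => astig (reflect r) u / Rpower (sin u) alpha) _ _ _
  filterlim_PI_sub_at_left H).
Qed.

End Reflection.

Theorem proposition2p2 (r : R -> R) (alpha : R) :
  support_fun_W_C3 r ->
  (isolated_umbilic_0 r -> forall mu0 : R, umbilic_slope_0 r mu0 ->
     (alpha + 1 < mu0 ->
        filterlim (fun t => astig r t / Rpower (sin t) alpha)
          (at_right 0) (locally 0)) /\
     (mu0 < alpha + 1 ->
        filterlim (fun t => astig r t / Rpower (sin t) alpha)
          (at_right 0) (Rbar_locally p_infty) \/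
        filterlim (fun t => astig r t / Rpower (sin t) alpha)
          (at_right 0) (Rbar_locally m_infty))) /\
  (isolated_umbilic_pi r -> forall mupi : R, umbilic_slope_pi r mupi ->
     (alpha + 1 < mupi ->
        filterlim (fun t => astig r t / Rpower (sin t) alpha)
          (at_left PI) (locally 0)) /\
     (mupi < alpha + 1 ->
        filterlim (fun t => astig r t / Rpower (sin t) alpha)
          (at_left PI) (Rbar_locally p_infty) \/
        filterlim (fun t => astig r t / Rpower (sin t) alpha)
          (at_left PI) (Rbar_locally m_infty))).
Proof.
intros [HC [Hev [Hper _]]]. split.
- now apply astig_asymptotics_0.
- intros Hiso mu Hmu.
  destruct (astig_asymptotics_0 (reflect r) (C3_reflect r HC) (reflect_even r Hev Hper) alpha
    (isolated_umbilic_reflect r HC Hiso) mu (umbilic_slope_reflect r HC mu Hmu)) as [Hzero Hinf].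
  split; intros Halpha.
  + now apply astig_div_Rpower_sin_reflect, Hzero.
  + destruct (Hinf Halpha); [left | right]; now apply astig_div_Rpower_sin_reflect.
Qed.
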